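(* Let $G$ be a finite group, let $H$ be a normal subgroup of $G$, and let $M$ be a subgroup with $H\leq M\leq G$. Let $C\subseteq G\setminus H$ be a union of some cosets of $H$ in $G$, and let $S_M,T_M$ be subsets of $M\setminus\{1\}$ such that $S_M^\alpha=T_M$ for some $\alpha\in\mathrm{Aut}(M)$ which fixes (setwise) every coset of $H$ in $M$. Put $S=C\cup S_M$ and $T=C\cup T_M$. Then $\mathrm{Cay}(G,S)\cong\mathrm{Cay}(G,T)$.
   Context: For a group $G$ and a subset $S\subseteq G$ with $1\notin S$, the Cayley digraph $\mathrm{Cay}(G,S)$ has vertex set $G$ and arc set $\{(g,sg)\mid g\in G,\ s\in S\}$. Isomorphism means digraph isomorphism. *)

From mathcomp Require Import all_boot all_fingroup.
Set Implicit Arguments. Unset Strict Implicit. Unset Printing Implicit Defensive.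
Import GroupScope.
Local Open Scope group_scope.

(* Cayley digraph Cay(G,S): vertex set G, arcs (g, s g), s in S.
   So (g,h) is an arc iff h * g^-1 \in S. *)
Definition cay_arc (gT : finGroupType) (S : {set gT}) (g h : gT) : bool :=
  h * g^-1 \in S.

Definition cay_iso (gT : finGroupType) (G S T : {set gT}) : Prop :=
  exists f : gT -> gT,
    [/\ {in G &, injective f}, f @: G = G &
        {in G &, forall g h, cay_arc S g h = cay_arc T (f g) (f h)}].

(* Transport alpha to every right coset M x: f x = alpha (x r^-1) r, with r
   the chosen representative of M x.  Then f is a bijection of G satisfying
   f (y x) = alpha y * f x for y in M, and f x lies in H x since alpha fixes
   the H-cosets of M.  Hence, H being normal, f h (f g)^-1 lies in H (h g^-1),
   and it equals alpha (h g^-1) when h g^-1 is in M.  The first fact leaves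
   membership in the union of H-cosets C unchanged; the second matches S_M
   with T_M, and outside M neither set is met. *)
From mathcomp Require Import all_boot all_fingroup.
Import GroupScope.
Local Open Scope group_scope.

Set Implicit Arguments.
Unset Strict Implicit.
Unset Printing Implicit Defensive.

Lemma mem_rcosetMV (gT : finGroupType) (H : {group gT}) (x y u v : gT) :
  x \in 'N(H) -> y \in 'N(H) -> u \in H :* x -> v \in H :* y ->
  u * v^-1 \in H :* (x * y^-1).
Proof.
move=> Nx Ny Hxu Hyv; rewrite -(rcoset_mul _ Nx) mem_mulg //.
by rewrite norm_rlcoset ?groupV // -invg_rcoset memV_invg.
Qed.

Lemma mem_cover_rcosets (gT : finGroupType) (H : {group gT}) (A : {set gT})
    (P : {set {set gT}}) (u v : gT) :
  P \subset rcosets H A -> v \in H :* u -> (v \in cover P) = (u \in cover P).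
Proof.
move=> sPR; suff cover_closed w z : z \in H :* w -> w \in cover P -> z \in cover P.
  by move=> Huv; apply/idP/idP; apply: cover_closed; rewrite // rcoset_sym.
move=> Hwz /bigcupP [B PB wB]; apply/bigcupP; exists B => //.
have /rcosetsP [a _ defB] := subsetP sPR B PB.
by rewrite defB in wB *; apply: rcoset_trans Hwz wB.
Qed.

Section RcosetTransport.

Variables (gT : finGroupType) (M : {group gT}) (alpha : {perm gT}).
Hypothesis autM_alpha : alpha \in Aut M.

Definition rcoset_transport (x : gT) : gT :=
  let r := repr (M :* x) in alpha (x * r^-1) * r.

Local Notation f := rcoset_transport.

Lemma mulV_repr_rcoset (x : gT) : x * (repr (M :* x))^-1 \in M.
Proof. by rewrite -mem_rcoset rcoset_sym mem_repr_rcoset. Qed.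

Lemma rcoset_transportMl (y x : gT) : y \in M -> f (y * x) = alpha y * f x.
Proof.
move=> My.
have eMyx : M :* (y * x) = M :* x by rewrite rcosetM (rcoset_id My).
have alphaM := morphicP (Aut_morphic autM_alpha).
by rewrite /f eMyx -mulgA (alphaM _ _ My (mulV_repr_rcoset x)) mulgA.
Qed.

Lemma rcoset_transport_rcoset (x : gT) : M :* f x = M :* x.
Proof.
rewrite -(rcoset_repr M x); apply/rcoset_eqP.
by rewrite mem_rcoset mulgK Aut_closed ?mulV_repr_rcoset.
Qed.

Lemma rcoset_transport_inj : injective f.
Proof.
move=> x y efxy.
have er : repr (M :* x) = repr (M :* y).
  by rewrite -rcoset_transport_rcoset efxy rcoset_transport_rcoset.
by move: efxy; rewrite /f er => /mulIg /perm_inj /mulIg.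
Qed.

Lemma rcoset_transport_imset (G : {group gT}) : M \subset G -> f @: G = G.
Proof.
move=> sMG; apply/eqP; rewrite eqEcard card_imset ?leqnn ?andbT; last first.
  exact: rcoset_transport_inj.
apply/subsetP=> _ /imsetP [x Gx ->].
have : f x \in M :* x by rewrite -rcoset_transport_rcoset rcoset_refl.
rewrite mem_rcoset => /(subsetP sMG) Gfx.
by rewrite -(mulgKV x (f x)) groupM.
Qed.

Lemma rcoset_transportMV (g h : gT) :
  h * g^-1 \in M -> f h * (f g)^-1 = alpha (h * g^-1).
Proof. by move=> Mhg; rewrite -{1}(mulgKV g h) rcoset_transportMl // mulgK. Qed.

Variable H : {group gT}.
Hypothesis alphaH_rcoset : {in M, forall x, alpha x \in H :* x}.

Lemma mem_rcoset_transport (x : gT) : f x \in H :* x.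
Proof.
have /rcosetP [k Hk ek] := alphaH_rcoset (mulV_repr_rcoset x).
by apply/rcosetP; exists k; rewrite // /f ek -mulgA mulgKV.
Qed.

Lemma mem_rcoset_transportMV (g h : gT) : g \in 'N(H) -> h \in 'N(H) ->
  f h * (f g)^-1 \in H :* (h * g^-1).
Proof. by move=> Ng Nh; apply: mem_rcosetMV; rewrite ?mem_rcoset_transport. Qed.

End RcosetTransport.

Theorem lemma3p1 (gT : finGroupType) (G H M : {group gT})
  (C SM TM : {set gT}) (alpha : {perm gT}) :
  H <| G -> H \subset M -> M \subset G ->
  (exists2 P : {set {set gT}}, P \subset rcosets H G & C = cover P) ->
  C \subset G :\: H ->
  SM \subset M :\ 1 -> TM \subset M :\ 1 ->
  alpha \in Aut M ->
  {in M, forall x, alpha x \in H :* x} ->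
  alpha @: SM = TM ->
  cay_iso G (C :|: SM) (C :|: TM).
Proof.
move=> nsHG sHM sMG [P sPR ->] _ sSM sTM autA alphaH imSM.
pose f := rcoset_transport M alpha.
exists f; split; first exact: in2W (rcoset_transport_inj autA).
  exact: rcoset_transport_imset.
move=> g h Gg Gh; rewrite /cay_arc.
have nHG := subsetP (normal_norm nsHG).
have Hz := mem_rcoset_transportMV alphaH (nHG g Gg) (nHG h Gh).
rewrite !in_setU (mem_cover_rcosets sPR Hz); congr (_ || _).
have [Mz | notMz] := boolP (h * g^-1 \in M).
  by rewrite rcoset_transportMV // -imSM mem_imset //; exact: perm_inj.
have notMz' : f h * (f g)^-1 \notin M.
  by move: Hz notMz => /rcosetP [k /(subsetP sHM) Mk ->]; rewrite (groupMl _ Mk).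
have sSM' : SM \subset M := subset_trans sSM (subsetDl M [set 1]).
have sTM' : TM \subset M := subset_trans sTM (subsetDl M [set 1]).
by rewrite (contraNF (subsetP sSM' _) notMz) (contraNF (subsetP sTM' _) notMz').
Qed.
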